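(* Let $a\in\mathbb{Q}\setminus\{-1,0,1\}$, $z\in\mathbb{C}$ with $|z|\le1$, and $\xi<x$ positive real numbers. Then \begin{multline*} \sum_{\substack{p\le x \\ \nu_p(a)=0}} z^{\omega(p-1) - \omega(\mathrm{ord}_p(a))} = \sum_{\ell\mid Q_\xi} (z-1)^{\omega(\ell)}\sum_{m\mid \ell}\mu(m)\, \#\bigl\{ p\le x : \nu_p(a)=0,\ \ell\mid (p-1)/\mathrm{ord}_p(a),\ m\ell\mid (p-1)\bigr\}\\ + O\biggl( \sum_{\xi<q^k\le x} \#\bigl\{ p\le x : \nu_p(a)=0,\ q^k \mid (p-1)/\mathrm{ord}_p(a),\ q^k\,\|\, (p-1) \bigr\} \biggr), \end{multline*} with an absolute implied constant, where the error sum is over prime powers $q^k$ ($k\ge1$) in $(\xi,x]$.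
   Context: $p,q$ denote primes. $\nu_p(a)$ is the $p$-adic valuation of $a$; $\mathrm{ord}_p(a)$ is the multiplicative order of $a$ mod $p$; $\omega(n)$ is the number of distinct prime factors; $\mu$ is the Möbius function; $q^k\| n$ means $q^k\mid n$ and $q^{k+1}\nmid n$. For $\xi>0$, $Q_\xi$ is the least common multiple of all positive integers $\le\xi$. The convention $0^0=1$ is used. *)

From HB Require Import structures.
From mathcomp Require Import all_boot all_order all_algebra all_fingroup all_field.
From mathcomp Require Import complex.
From mathcomp Require Import Rstruct.
From Stdlib Require Rdefinitions.
Set Implicit Arguments. Unset Strict Implicit. Unset Printing Implicit Defensive.
Import Order.TTheory GRing.Theory Num.Theory.

Definition RR : rcfType := Rdefinitions.R.
Notation CC := (complex RR).

Definition nu (p : nat) (a : rat) : int :=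
  (logn p `|numq a|%N)%:Z - (logn p `|denq a|%N)%:Z.

(* Multiplicative order of a modulo p: the order of the class of a in the
   unit group of F_p (only meaningful when p is prime and nu_p(a) = 0). *)
Definition ordp (p : nat) (a : rat) : nat :=
  #[insubd (1 : {unit 'F_p}) (ratr a : 'F_p)]%g.

Definition omega (n : nat) : nat := size (primes n).

Definition mu (n : nat) : int :=
  if (0 < n) && all (fun q => logn q n == 1%N) (primes n)
  then ((-1) ^+ omega n)%R else 0%R.

Definition Qxi (xi : RR) : nat :=
  \big[lcmn/1%N]_(1 <= i < (Num.truncn xi).+1 | (i%:R <= xi)%R) i.

Definition prime_count (x : RR) (P : nat -> bool) : nat :=
  \sum_(p < (Num.truncn x).+1 | prime p && (p%:R <= x)%R && P p) 1%N.

From HB Require Import structures.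
From mathcomp Require Import all_boot all_order all_algebra all_fingroup all_field.
From mathcomp Require Import complex.
From mathcomp Require Import Rstruct.

(* Fix a prime p with nu_p(a) = 0 and put n = p - 1, d = ord_p(a), N = n / d and
   e_q = nu_q(n).  For l | n the Moebius sum of mu(m) [m l | n] over m | l is the
   indicator of gcd(l, n / l) = 1, so the contribution of p to the main term is the sum
   of (z - 1)^omega(l) over the unitary divisors l of n dividing both N and Q_xi; by
   multiplicativity it equals z^c, where c counts the q | n such that q^e_q divides both
   N and Q_xi.  On the other hand omega(n) - omega(d) counts the q | n with q^e_q | N.
   The two powers of z differ by at most 2, and only if some q^e_q divides N but not
   Q_xi; then q^e_q > xi, and q^e_q is one of the prime powers counted for p in the
   error term.  Summing over p gives the estimate with constant 2. *)

Set Implicit Arguments.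
Unset Strict Implicit.
Unset Printing Implicit Defensive.

Import Order.TTheory GRing.Theory Num.Theory.

Lemma gcdn_coprime_divisorM a b l1 l2 :
  coprime a b -> l1 %| a -> l2 %| b -> gcdn a (l1 * l2) = l1.
Proof.
move=> co_ab l1a l2b; rewrite Gauss_gcdl; first exact/gcdn_idPr.
exact: coprime_dvdr l2b co_ab.
Qed.

Lemma big_divisorsM (R : nmodType) (F : nat -> R) a b :
  coprime a b -> 0 < a -> 0 < b ->
  (\sum_(l <- divisors (a * b)) F l =
     \sum_(l1 <- divisors a) \sum_(l2 <- divisors b) F (l1 * l2))%R.
Proof.
move=> co_ab a_gt0 b_gt0; have ab_gt0 : 0 < a * b by rewrite muln_gt0 a_gt0.
have co_ba : coprime b a by rewrite coprime_sym.
rewrite -(big_allpairs_dep (h := fun l1 l2 => l1 * l2)) /=; apply/perm_big/uniq_perm.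
- exact: divisors_uniq.
- rewrite allpairs_uniq ?divisors_uniq // => -[u1 u2] [v1 v2].
  move=> /allpairsP[[x1 x2] /= [+ + [-> ->]]] /allpairsP[[y1 y2] /= [+ + [-> ->]]].
  rewrite -!dvdn_divisors // => x1a x2b y1a y2b /= eq12.
  have -> : x1 = y1.
    rewrite -(gcdn_coprime_divisorM co_ab x1a x2b) eq12.
    exact: gcdn_coprime_divisorM co_ab y1a y2b.
  have -> : x2 = y2.
    rewrite -(gcdn_coprime_divisorM co_ba x2b x1a) mulnC eq12 mulnC.
    exact: gcdn_coprime_divisorM co_ba y2b y1a.
  by [].
move=> l; apply/idP/allpairsP => [|[[l1 l2] /= [+ + ->]]]; last first.
  by rewrite -!dvdn_divisors //; apply: dvdn_mul.
rewrite -dvdn_divisors // => lab; exists (gcdn l a, gcdn l b) => /=.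
rewrite -!dvdn_divisors // !dvdn_gcdr; split=> //; apply/eqP; rewrite eqn_dvd.
rewrite Gauss_dvd ?dvdn_gcdl //; last first.
  by rewrite (coprime_dvdl (dvdn_gcdr _ _)) // (coprime_dvdr (dvdn_gcdr _ _)).
by rewrite muln_gcdl dvdn_gcd dvdn_mulr //= muln_gcdr dvdn_gcd lab dvdn_mull.
Qed.

Lemma big_divisors_multiplicative (R : comPzSemiRingType) (H : nat -> nat -> R) n :
  H 1 1 = 1%R ->
  (forall a b l1 l2, coprime a b -> 0 < a -> 0 < b -> l1 %| a -> l2 %| b ->
     H (a * b) (l1 * l2) = (H a l1 * H b l2)%R) ->
  0 < n ->
  (\sum_(l <- divisors n) H n l =
     \prod_(q <- primes n) \sum_(l <- divisors (q ^ logn q n)%N) H (q ^ logn q n)%N l)%R.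
Proof.
move=> H11 HM; elim/ltn_ind: n => n IHn n_gt0.
have [n_le1|n_gt1] := leqP n 1.
  have -> : n = 1 by apply/eqP; rewrite eqn_leq n_le1.
  by rewrite big_nil big_seq1.
set q := pdiv n; have q_pr : prime q := pdiv_prime n_gt1.
have qn : q \in primes n by rewrite mem_primes q_pr n_gt0 pdiv_dvd.
have n_eq : n`_q * n`_q^' = n := partnC q n_gt0.
set a := n`_q in n_eq *; set b := n`_q^' in n_eq *.
have co_ab : coprime a b := coprime_partC _ _ _.
have [a_gt0 b_gt0] : 0 < a /\ 0 < b by rewrite !part_gt0.
have b_lt : b < n by rewrite -[X in _ < X]n_eq ltn_Pmull // p_part_gt1.
have HMn l1 l2 : l1 \in divisors a -> l2 \in divisors b ->
    H (a * b) (l1 * l2) = (H a l1 * H b l2)%R.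
  by rewrite -!dvdn_divisors // => l1a l2b; rewrite HM.
rewrite -[in LHS]n_eq big_divisorsM //.
under eq_big_seq => l1 l1a do under eq_big_seq => l2 l2b do rewrite HMn //.
rewrite [RHS](bigD1_seq q) ?primes_uniq //= -p_part -/a.
under eq_bigr do rewrite -mulr_sumr.
rewrite -mulr_suml (IHn b) //; congr (GRing.mul _ _).
rewrite primes_part big_filter big_seq_cond [RHS]big_seq_cond.
apply: eq_big => [r|r /andP[rn rq]]; first by rewrite !inE.
move: rq; rewrite !inE => /negPf rq.
by rewrite -[in RHS]n_eq lognM // /a p_part lognX (logn_prime _ q_pr) rq muln0.
Qed.

Lemma big_divisors_pfactor (R : nmodType) (F : nat -> R) q e : prime q ->
  (\sum_(l <- divisors (q ^ e)) F l = \sum_(k < e.+1) F (q ^ k)%N)%R.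
Proof.
move=> q_pr; have q_gt1 := prime_gt1 q_pr.
rewrite -(big_mkord xpredT (fun k => F (q ^ k)%N)) -(big_map (expn q) xpredT).
apply/perm_big/uniq_perm.
- exact: divisors_uniq.
- by rewrite (map_inj_uniq (expnI q_gt1)) iota_uniq.
move=> l; rewrite -dvdn_divisors ?expn_gt0 ?prime_gt0 //.
apply/(dvdn_pfactor _ _ q_pr)/mapP => -[k].
  by move=> k_le_e ->; exists k; rewrite // mem_iota.
by rewrite mem_iota ltnS => k_le_e ->; exists k.
Qed.

Lemma big_divisors_dvd (R : nmodType) (F : nat -> R) a b : 0 < a -> 0 < b ->
  (\sum_(l <- divisors a | (l %| b)%N) F l = \sum_(l <- divisors (gcdn a b)) F l)%R.
Proof.
move=> a_gt0 b_gt0; rewrite -big_filter; apply/perm_big/uniq_perm.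
- by rewrite filter_uniq ?divisors_uniq.
- exact: divisors_uniq.
by move=> l; rewrite mem_filter -!dvdn_divisors ?gcdn_gt0 ?a_gt0 // dvdn_gcd andbC.
Qed.

Lemma perm_primesM a b : coprime a b -> 0 < a -> 0 < b ->
  perm_eq (primes (a * b)) (primes a ++ primes b).
Proof.
move=> co_ab a_gt0 b_gt0; apply: uniq_perm; rewrite ?primes_uniq //.
  by rewrite cat_uniq !primes_uniq andbT -coprime_has_primes.
by move=> r; rewrite primesM // mem_cat.
Qed.

Lemma omegaM a b : coprime a b -> 0 < a -> 0 < b ->
  omega (a * b) = omega a + omega b.
Proof. by move=> co_ab a_gt0 b_gt0; rewrite /omega -size_cat; apply/perm_size/perm_primesM. Qed.

Lemma omega_pfactor q k : prime q -> 0 < k -> omega (q ^ k) = 1.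
Proof. by move=> q_pr k_gt0; rewrite /omega primesX // primes_prime. Qed.

Lemma omega_sub_dvd n d : 0 < n -> d %| n ->
  omega n - omega d = count (fun q => q ^ logn q n %| n %/ d) (primes n).
Proof.
move=> n_gt0 dn; have d_gt0 := dvdn_gt0 n_gt0 dn.
have nd_gt0 : 0 < n %/ d by rewrite divn_gt0 // dvdn_leq.
have -> : count (fun q => q ^ logn q n %| n %/ d) (primes n) =
          count (predC (mem (primes d))) (primes n).
  apply: eq_in_count => q qn; have := qn; rewrite mem_primes => /and3P[q_pr _ _].
  have e_gt0 : 0 < logn q n by rewrite logn_gt0.
  have le_de : logn q d <= logn q n by rewrite dvdn_leq_log.
  rewrite /= pfactor_dvdn // logn_div // -logn_gt0 -eqn0Ngt.
  by rewrite leq_subRL // -{2}[logn q n]add0n leq_add2r leqn0.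
have -> : omega d = count (mem (primes d)) (primes n).
  rewrite -size_filter /omega; apply/perm_size/uniq_perm.
  - exact: primes_uniq.
  - by rewrite filter_uniq ?primes_uniq.
  move=> q; rewrite mem_filter andb_idr //= !mem_primes => /and3P[q_pr _ qd].
  by rewrite q_pr n_gt0 (dvdn_trans qd dn).
by rewrite /omega -(count_predC (mem (primes d)) (primes n)) addKn.
Qed.

Lemma muM a b : coprime a b -> 0 < a -> 0 < b -> mu (a * b) = (mu a * mu b)%R.
Proof.
move=> co_ab a_gt0 b_gt0.
have lognM_coprime c d r : coprime c d -> 0 < c -> 0 < d -> r \in primes c ->
    logn r (c * d) = logn r c.
  move=> co_cd c_gt0 d_gt0; rewrite mem_primes => /and3P[r_pr _ rc].
  by rewrite lognM // (logn_coprime (coprime_dvdl rc co_cd)) addn0.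
rewrite /mu muln_gt0 a_gt0 b_gt0 (perm_all _ (perm_primesM co_ab a_gt0 b_gt0)) all_cat.
have -> : all (fun q => logn q (a * b) == 1) (primes a) =
          all (fun q => logn q a == 1) (primes a).
  by apply: eq_in_all => r ra; rewrite lognM_coprime.
have -> : all (fun q => logn q (a * b) == 1) (primes b) =
          all (fun q => logn q b == 1) (primes b).
  by apply: eq_in_all => r rb; rewrite mulnC lognM_coprime // coprime_sym.
case: (all _ (primes a)); case: (all _ (primes b)); rewrite ?mulr0 ?mul0r //.
by rewrite omegaM // exprD.
Qed.

Lemma mu_pfactor q k : prime q ->
  mu (q ^ k) = (if k == 0 then 1 else if k == 1 then -1 else 0)%R.
Proof.
move=> q_pr; case: k => [|[|k]] //=.
  by rewrite /mu expn1 prime_gt0 //= primes_prime //= logn_prime // eqxx /omega primes_prime.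
by rewrite /mu primesX // primes_prime //= pfactorK //= andbF.
Qed.

Lemma sum_mu_pfactor (R : pzRingType) q e : prime q -> 0 < e ->
  (\sum_(m <- divisors (q ^ e)) (mu m)%:~R = 0 :> R)%R.
Proof.
move=> q_pr; case: e => // e _.
rewrite big_divisors_pfactor // !big_ord_recl big1 => [|k _].
  by rewrite !mu_pfactor //= addr0 addrN.
by rewrite mu_pfactor.
Qed.

Lemma sum_mu (R : comPzRingType) g : 0 < g ->
  (\sum_(m <- divisors g) (mu m)%:~R = (g == 1)%:R :> R)%R.
Proof.
move=> g_gt0; rewrite (@big_divisors_multiplicative _ (fun _ m => (mu m)%:~R)%R) //.
- have [g_le1|g_gt1] := leqP g 1.
    have -> : g = 1 by apply/eqP; rewrite eqn_leq g_le1.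
    by rewrite big_nil.
  have q_pr := pdiv_prime g_gt1.
  have qg : pdiv g \in primes g by rewrite mem_primes q_pr g_gt0 pdiv_dvd.
  rewrite (bigD1_seq (pdiv g)) ?primes_uniq //= sum_mu_pfactor ?logn_gt0 // mul0r.
  by rewrite gtn_eqF.
move=> a b l1 l2 co_ab a_gt0 b_gt0 l1a l2b.
rewrite -intrM -muM ?(dvdn_gt0 a_gt0 l1a) ?(dvdn_gt0 b_gt0 l2b) //.
exact: coprime_dvdl l1a (coprime_dvdr l2b co_ab).
Qed.

Lemma sum_mu_unitary (R : comPzRingType) l n : 0 < n -> l %| n ->
  (\sum_(m <- divisors l) (mu m)%:~R * (m * l %| n)%N%:R
     = (coprime l (n %/ l)%N)%:R :> R)%R.
Proof.
move=> n_gt0 ln; have l_gt0 := dvdn_gt0 n_gt0 ln.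
have nl_gt0 : 0 < n %/ l by rewrite divn_gt0 // dvdn_leq.
under eq_bigr do rewrite -dvdn_divRL // mulr_natr mulrb.
by rewrite -big_mkcond big_divisors_dvd // sum_mu ?gcdn_gt0 ?l_gt0.
Qed.

Lemma sum_unitary_pfactor (R : comPzSemiRingType) (P : pred nat) (w : R) q e :
  P 1 -> prime q -> 0 < e ->
  (\sum_(l <- divisors (q ^ e)%N) (coprime l (q ^ e %/ l)%N && P l)%:R * w ^+ omega l
     = 1 + (P (q ^ e)%N)%:R * w)%R.
Proof.
move=> P1 q_pr; have q_gt0 := prime_gt0 q_pr; case: e => // e _.
rewrite big_divisors_pfactor // big_ord_recl big_ord_recr big1 => [|k _] /=.
  rewrite expn0 divn1 coprime1n P1 expr0 mul1r.
  by rewrite divnn expn_gt0 q_gt0 coprimen1 omega_pfactor // expr1 add0r.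
have k_lt_e : k < e := ltn_ord k.
rewrite /bump add1n -expnB // 1?ltnW // coprime_pexpl // coprime_pexpr ?subn_gt0 //.
by rewrite /coprime gcdnn (gtn_eqF (prime_gt1 q_pr)) mul0r.
Qed.

Lemma sum_unitary_divisors (R : comPzSemiRingType) (P : pred nat) (w : R) n :
  P 1 -> (forall a b, coprime a b -> P (a * b) = P a && P b) -> 0 < n ->
  (\sum_(l <- divisors n) (coprime l (n %/ l)%N && P l)%:R * w ^+ omega l =
     \prod_(q <- primes n) (1 + (P (q ^ logn q n)%N)%:R * w))%R.
Proof.
move=> P1 PM n_gt0.
rewrite (@big_divisors_multiplicative _
  (fun n l => (coprime l (n %/ l)%N && P l)%:R * w ^+ omega l)%R) //.
- apply: eq_big_seq => q; rewrite mem_primes => /and3P[q_pr _ qn].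
  by rewrite sum_unitary_pfactor // logn_gt0 mem_primes q_pr n_gt0.
- by rewrite divnn /= P1 mul1r expr0.
move=> a b l1 l2 co_ab a_gt0 b_gt0 l1a l2b.
have l1_gt0 := dvdn_gt0 a_gt0 l1a; have l2_gt0 := dvdn_gt0 b_gt0 l2b.
have co_l1l2 : coprime l1 l2 := coprime_dvdl l1a (coprime_dvdr l2b co_ab).
have co_l1b : coprime l1 (b %/ l2).
  exact: coprime_dvdl l1a (coprime_dvdr (dvdn_div l2b) co_ab).
have co_l2a : coprime l2 (a %/ l1).
  by rewrite coprime_sym (coprime_dvdl (dvdn_div l1a) (coprime_dvdr l2b co_ab)).
have -> : (a * b) %/ (l1 * l2) = (a %/ l1) * (b %/ l2).
  case/dvdnP: l1a => a' ->; case/dvdnP: l2b => b' ->.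
  by rewrite mulnACA !mulnK ?muln_gt0 ?l1_gt0.
rewrite omegaM // PM // exprD coprimeMl !coprimeMr co_l1b co_l2a andbT andTb.
by case: (coprime l1 _); case: (coprime l2 _); case: (P l1); case: (P l2);
  rewrite /= ?mul0r ?mul1r ?mulr0.
Qed.

Lemma prod_indicator_count (R : comPzRingType) (T : Type) (b : pred T) (z : R) s :
  (\prod_(q <- s) (1 + (b q)%:R * (z - 1)) = z ^+ count b s)%R.
Proof.
elim: s => [|q s IHs]; first by rewrite big_nil.
by rewrite big_cons IHs /= exprD; case: (b q); rewrite ?mul0r ?addr0 ?mul1r // addrC subrK.
Qed.

Lemma moebius_sum_exp_count (R : comPzRingType) (z : R) n N Q :
  0 < n -> N %| n -> 0 < Q ->
  (\sum_(l <- divisors Q) (z - 1) ^+ omega l *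
     \sum_(m <- divisors l) (mu m)%:~R * ((l %| N) && (m * l %| n))%N%:R
   = z ^+ count (fun q => (q ^ logn q n %| Q) && (q ^ logn q n %| N))%N (primes n))%R.
Proof.
move=> n_gt0 Nn Q_gt0; set P := fun l => (l %| Q) && (l %| N).
have P1 : P 1 by rewrite /P !dvd1n.
have PM a b : coprime a b -> P (a * b) = P a && P b.
  by move=> co_ab; rewrite /P !Gauss_dvd // andbACA.
rewrite -prod_indicator_count -(sum_unitary_divisors _ P1 PM n_gt0).
transitivity (\sum_(l <- divisors Q | (l %| n)%N)
                (coprime l (n %/ l)%N && P l)%:R * (z - 1) ^+ omega l)%R.
  rewrite [RHS]big_mkcond; apply: eq_big_seq => l; rewrite -dvdn_divisors // => lQ.
  have [lN|lN] := boolP (l %| N).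
    have ln := dvdn_trans lN Nn.
    under eq_bigr do rewrite andTb.
    by rewrite ln sum_mu_unitary // /P lQ lN !andbT mulrC.
  rewrite big1 => [|m _]; last by rewrite mulr0.
  by rewrite /P (negPf lN) !andbF mulr0 mul0r; case: ifP.
rewrite big_divisors_dvd // gcdnC -big_divisors_dvd // big_mkcond.
by apply: eq_bigr => l _; case: ifP => // /negPf lQ; rewrite /P lQ andbF mul0r.
Qed.

Lemma norm_exprD_sub_le (R : numDomainType) (z : R) A B : (`|z| <= 1)%R ->
  (`|z ^+ (B + A) - z ^+ B| <= (2 * (0 < A))%:R)%R.
Proof.
move=> z_le1; case: A => [|A]; first by rewrite addn0 subrr normr0.
have zX_le1 k : (`|z ^+ k| <= 1)%R by rewrite normrX exprn_ile1.
rewrite exprD -{2}(mulr1 (z ^+ B)%R) -mulrBr normrM muln1 -[2%:R%R]mul1r.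
apply: ler_pM => //; apply: le_trans (ler_normB _ _) _.
by rewrite normr1 -[2%:R%R]/(1 + 1)%R lerD2r.
Qed.

Lemma moebius_sum_approx (R : numDomainType) (z : R) n d Q :
  (`|z| <= 1)%R -> 0 < n -> d %| n -> 0 < Q ->
  (`| z ^+ (omega n - omega d) -
      \sum_(l <- divisors Q) (z - 1) ^+ omega l *
        \sum_(m <- divisors l) (mu m)%:~R * ((l %| n %/ d) && (m * l %| n))%N%:R |
   <= (2 * has (fun q => ~~ (q ^ logn q n %| Q) && (q ^ logn q n %| n %/ d))
              (primes n))%N%:R)%R.
Proof.
move=> z_le1 n_gt0 dn Q_gt0.
rewrite moebius_sum_exp_count ?dvdn_div // omega_sub_dvd // has_count.
rewrite -size_filter -(count_predC (fun q => q ^ logn q n %| Q)) !count_filter.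
exact: norm_exprD_sub_le.
Qed.

Lemma Qxi_gt0 xi : 0 < Qxi xi.
Proof.
rewrite /Qxi big_seq_cond; elim/big_ind: _ => // [u v u_gt0 v_gt0|i].
  by rewrite lcmn_gt0 u_gt0.
by rewrite mem_index_iota => /andP[/andP[]].
Qed.

Lemma dvdn_Qxi (xi : RR) m : 0 < m -> (m%:R <= xi)%R -> m %| Qxi xi.
Proof.
move=> m_gt0 m_le_xi; have xi_ge0 : (0 <= xi)%R by apply: le_trans m_le_xi.
rewrite /Qxi (big_rem m) /=; first by rewrite m_le_xi dvdn_lcml.
by rewrite mem_index_iota m_gt0 ltnS truncn_ge_nat.
Qed.

Lemma has_large_pfactor_le (xi x : RR) n N : 0 < n -> (n%:R <= x)%R ->
  has (fun q => ~~ (q ^ logn q n %| Qxi xi) && (q ^ logn q n %| N)) (primes n) <=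
  \sum_(q < (Num.truncn x).+1 | prime q)
    \sum_(1 <= k < (Num.truncn x).+1 |
            (xi < (q ^ k)%N%:R)%R && ((q ^ k)%N%:R <= x)%R)
      [&& q ^ k %| N, q ^ k %| n & ~~ (q ^ k.+1 %| n)].
Proof.
move=> n_gt0 n_le_x; case: hasP => // -[q qn /andP[qe_Q qe_N]].
move: (qn); rewrite mem_primes => /and3P[q_pr _ qdn]; set e := logn q n.
have e_gt0 : 0 < e by rewrite logn_gt0.
have qe_le_n : q ^ e <= n by apply: dvdn_leq; rewrite ?pfactor_dvdnn.
have n_le_T : n <= Num.truncn x by rewrite truncn_ge_nat // (le_trans _ n_le_x).
have q_lt : q < (Num.truncn x).+1.
  by rewrite ltnS (leq_trans _ n_le_T) // dvdn_leq.
rewrite (bigD1 (Ordinal q_lt)) //= (leq_trans _ (leq_addr _ _)) //.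
have e_in : e \in index_iota 1 (Num.truncn x).+1.
  rewrite mem_index_iota e_gt0 ltnS (leq_trans _ n_le_T) // (leq_trans _ qe_le_n) //.
  exact/ltnW/ltn_expl/prime_gt1.
rewrite (big_rem e) //= (leq_trans _ (leq_addr _ _)) //.
have -> : (xi < (q ^ e)%N%:R)%R.
  rewrite real_ltNge ?num_real //; apply: contra qe_Q.
  by apply: dvdn_Qxi; rewrite expn_gt0 prime_gt0.
have -> : ((q ^ e)%N%:R <= x)%R by rewrite (le_trans _ n_le_x) // ler_nat.
by rewrite qe_N pfactor_dvdnn pfactor_dvdn // ltnn.
Qed.

Lemma moebius_sum_Qxi_approx (R : numDomainType) (z : R) (xi x : RR) n d :
  (`|z| <= 1)%R -> 0 < n -> (n%:R <= x)%R -> d %| n ->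
  (`| z ^+ (omega n - omega d) -
      \sum_(l <- divisors (Qxi xi)) (z - 1) ^+ omega l *
        \sum_(m <- divisors l) (mu m)%:~R * ((l %| n %/ d) && (m * l %| n))%N%:R |
   <= 2 * (\sum_(q < (Num.truncn x).+1 | prime q)
             \sum_(1 <= k < (Num.truncn x).+1 |
                     (xi < (q ^ k)%N%:R)%R && ((q ^ k)%N%:R <= x)%R)
                [&& q ^ k %| n %/ d, q ^ k %| n & ~~ (q ^ k.+1 %| n)])%N%:R)%R.
Proof.
move=> z_le1 n_gt0 n_le_x dn.
apply: le_trans (moebius_sum_approx z_le1 n_gt0 dn (Qxi_gt0 xi)) _.
by rewrite natrM ler_wpM2l // ler_nat has_large_pfactor_le.
Qed.

Lemma ordp_dvdn p a : prime p -> ordp p a %| p.-1.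
Proof.
move=> p_pr; rewrite /ordp -[X in _ %| X.-1](card_Fp p_pr) -card_finField_unit.
by apply: cyclic.order_dvdG; rewrite inE.
Qed.

Lemma prime_countE x (A P : pred nat) :
  prime_count x (fun p => A p && P p) =
  \sum_(p < (Num.truncn x).+1 | prime p && (p%:R <= x)%R && A p) P p.
Proof.
rewrite /prime_count big_mkcond [RHS]big_mkcond; apply: eq_bigr => p _.
by case: (prime p); case: (_ <= x)%R; case: (A p); case: (P p).
Qed.

Lemma exchange_sum_prime_count (R : pzSemiRingType) (I : Type) (r : seq I) (c : I -> R)
    x (A : pred nat) (P : I -> pred nat) :
  (\sum_(i <- r) c i * (prime_count x (fun p => A p && P i p))%:R
   = \sum_(p < (Num.truncn x).+1 | prime p && (p%:R <= x) && A p)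
       \sum_(i <- r) c i * (P i p)%:R)%R.
Proof.
under eq_bigr do rewrite prime_countE natr_sum mulr_sumr.
exact: exchange_big.
Qed.

Lemma exchange_sum2_prime_count (I J : Type) (r : seq I) (s : seq J) (PI : pred I)
    (PJ : I -> pred J) x (A : pred nat) (P : I -> J -> pred nat) :
  \sum_(i <- r | PI i) \sum_(j <- s | PJ i j) prime_count x (fun p => A p && P i j p)
  = \sum_(p < (Num.truncn x).+1 | prime p && (p%:R <= x)%R && A p)
      \sum_(i <- r | PI i) \sum_(j <- s | PJ i j) P i j p.
Proof.
under eq_bigr do under eq_bigr do rewrite prime_countE.
under eq_bigr do rewrite exchange_big.
exact: exchange_big.
Qed.

Local Open Scope ring_scope.

Theorem proposition2p6 :
  exists C : RR, forall (a : rat) (z : CC) (xi x : RR),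
    a != 0 -> a != 1 -> a != -1 ->
    `|z| <= 1 ->
    0 < xi -> xi < x ->
    `| \sum_(p < (Num.truncn x).+1 | prime p && (p%:R <= x) && (nu p a == 0))
          z ^+ (omega p.-1 - omega (ordp p a))%N
       - \sum_(l <- divisors (Qxi xi))
           (z - 1) ^+ omega l *
           \sum_(m <- divisors l)
              (mu m)%:~R *
              (prime_count x (fun p => [&& nu p a == 0,
                                          (l %| p.-1 %/ ordp p a)%N
                                        & (m * l %| p.-1)%N]))%:R |
    <= ((C * (\sum_(q < (Num.truncn x).+1 | prime q)
               \sum_(1 <= k < (Num.truncn x).+1 |
                       (xi < (q ^ k)%N%:R)%R && ((q ^ k)%N%:R <= x)%R)
                  prime_count x (fun p => [&& nu p a == 0,
                                              (q ^ k %| p.-1 %/ ordp p a)%N,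
                                              (q ^ k %| p.-1)%N
                                            & ~~ (q ^ k.+1 %| p.-1)%N]))%N%:R)%R)%:C%C.
Proof.
(* The estimate holds prime by prime and only uses [ordp p a %| p.-1]. *)
exists 2 => a z xi x _ _ _ z_le1 _ _.
under [X in _ - X]eq_bigr => l _ do rewrite exchange_sum_prime_count mulr_sumr.
rewrite exchange_big -sumrB /= exchange_sum2_prime_count.
rewrite rmorphM /= !rmorph_nat natr_sum mulr_sumr.
apply: le_trans (ler_norm_sum _ _ _) _; apply: ler_sum => p /andP[/andP[p_pr p_le_x] _].
apply: moebius_sum_Qxi_approx; rewrite ?ordp_dvdn //.
  by rewrite -subn1 subn_gt0 prime_gt1.
by rewrite (le_trans _ p_le_x) // ler_nat leq_pred.
Qed.
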